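(* Let $h\ge 3$ and let $W\in\mathcal W^2_{h\times 3}$ be an atomic $2$-full word. Then $W$ contains a bench with its seat in column $1$ and legs in column $2$, and a bench with its seat in column $3$ and legs in column $2$.
   Context: A 2-dimensional binary word of dimensions $h\times w$ is an $h\times w$ matrix with entries in $\{\square,\blacksquare\}$ (filled cells $\blacksquare$, empty cells $\square$). Two cells $(i,j),(i',j')$ are adjacent if $|i-i'|+|j-j'|=1$; the degree of a filled cell is the number of filled cells adjacent to it. $\mathcal W^2_{h\times w}$ is the set of $h\times w$ binary words in which every filled cell has degree at most $2$; $W$ is $2$-full if its number of filled cells is maximal in $\mathcal W^2_{h\times w}$. $W$ is atomic if no row of $W$ consists only of empty cells. For columns $j,j'$ with $|j-j'|=1$, a bench with seat in column $j$ and legs in column $j'$ is given by integers $n\ge 3$ and $i$ with $1\le i\le i+n-1\le h$ such that the cells $(i,j),(i+1,j),\dots,(i+n-1,j)$ are all filled, the cells $(i,j')$ and $(i+n-1,j')$ are filled, and the cells $(i+1,j'),\dots,(i+n-2,j')$ are empty. *)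

(* Binary words are boolean matrices: true = filled cell. *)
From mathcomp Require Import all_boot all_algebra.
Set Implicit Arguments. Unset Strict Implicit. Unset Printing Implicit Defensive.

Section Words.
Variables h w : nat.

(* value of cell (i, j) with 0-based nat coordinates; false outside the grid *)
Definition filled (W : 'M[bool]_(h, w)) (i j : nat) : bool :=
  match @insub nat (fun k => k < h) _ i, @insub nat (fun k => k < w) _ j with
  | Some a, Some b => W a b
  | _, _ => false
  end.

Definition adjacent (c d : 'I_h * 'I_w) : bool :=
  let: (i, j) := c in let: (i', j') := d in
  [|| ((i : nat) == i'.+1) && ((j : nat) == j'),
      ((i' : nat) == i.+1) && ((j : nat) == j'),
      ((i : nat) == i') && ((j : nat) == j'.+1)
    | ((i : nat) == i') && ((j' : nat) == j.+1)].

Definition degree (W : 'M[bool]_(h, w)) (c : 'I_h * 'I_w) : nat :=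
  #|[set d : 'I_h * 'I_w | W d.1 d.2 && adjacent c d]|.

Definition nfilled (W : 'M[bool]_(h, w)) : nat :=
  #|[set c : 'I_h * 'I_w | W c.1 c.2]|.

Definition inW2 (W : 'M[bool]_(h, w)) : Prop :=
  forall c : 'I_h * 'I_w, W c.1 c.2 -> degree W c <= 2.

Definition two_full (W : 'M[bool]_(h, w)) : Prop :=
  inW2 W /\ forall W' : 'M[bool]_(h, w), inW2 W' -> nfilled W' <= nfilled W.

Definition atomic (W : 'M[bool]_(h, w)) : Prop :=
  forall i : 'I_h, exists j : 'I_w, W i j.

(* bench with seat in column j and legs in column j' (0-based columns, 0-based
   starting row i); n >= 3 is the length of the seat *)
Definition bench (W : 'M[bool]_(h, w)) (j j' : nat) : Prop :=
  [/\ j < w, j' < w & ((j.+1 == j') || (j'.+1 == j))] /\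
  exists n i : nat,
    [/\ 3 <= n, i + n <= h,
        (forall k, k < n -> filled W (i + k) j),
        filled W i j' && filled W (i + n - 1) j'
      & (forall k, 0 < k -> k < n - 1 -> ~~ filled W (i + k) j')].

End Words.

From mathcomp Require Import all_boot all_algebra zify.
From Stdlib Require Import Classical.
Set Implicit Arguments. Unset Strict Implicit. Unset Printing Implicit Defensive.

(* The word whose filled cells are the two outer columns together with the
   first and last rows lies in W^2 and has 2h + 2 filled cells, so a 2-full
   word has at least that many.  Conversely, scan an atomic word of width 3
   row by row, remembering the last two rows and whether the current run of
   filled cells in column 1 started at a row whose column-2 cell is filled.
   A finite computation over this automaton shows that, as long as no bench
   with seat in column 1 and legs in column 2 is completed, the number of
   filled cells among the first k rows never exceeds 2k + 1.  Column 3 follows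
   by reflecting the word. *)

Definition neighbours (f : nat -> nat -> bool) (i j : nat) : nat :=
  ((0 < i) && f i.-1 j) + f i.+1 j + ((0 < j) && f i j.-1) + f i j.+1.

Definition bench_in (f : nat -> nat -> bool) (h j j' : nat) : Prop :=
  exists n i : nat,
    [/\ 3 <= n, i + n <= h, (forall k, k < n -> f (i + k) j),
        f i j' && f (i + n - 1) j'
      & (forall k, 0 < k -> k < n - 1 -> ~~ f (i + k) j')].

Definition row := (bool * bool * bool)%type.
Definition empty_row : row := (false, false, false).
Definition row_size (r : row) : nat := let: (x, y, z) := r in x + y + z.

Definition deg2_row (a b c : row) : bool :=
  let: (a0, a1, a2) := a in let: (b0, b1, b2) := b in let: (c0, c1, c2) := c in
  [&& b0 ==> (a0 + c0 + b1 <= 2), b1 ==> (a1 + c1 + b0 + b2 <= 2)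
    & b2 ==> (a2 + c2 + b1 <= 2)].

(* A state is (row k-2, row k-1, t) after scanning k rows, where t > 0 iff
   row k-1 ends a run in column 0 whose first row also has column 1 filled,
   and t = 2 iff that run has length at least 2 (so a new row filled in both
   columns 0 and 1 would complete a bench). *)
Definition state := (row * row * nat)%type.
Definition init_state : state := (empty_row, empty_row, 0).

Definition next_run (s : state) (c : row) : nat :=
  if ~~ c.1.1 then 0 else if 0 < s.2 then 2 else c.1.2.

Definition closes_bench (s : state) (c : row) : bool := [&& c.1.1, c.1.2 & 2 <= s.2].

Definition step (s : state) (c : row) : state := (s.1.2, c, next_run s c).

Definition admissible (s : state) (c : row) : bool :=
  [&& c != empty_row, deg2_row s.1.1 s.1.2 c & ~~ closes_bench s c].

Definition all_rows : seq row :=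
  [seq (xy, z) | xy <- [seq (x, y) | x <- [:: false; true], y <- [:: false; true]],
                 z <- [:: false; true]].

Lemma mem_all_rows (c : row) : c \in all_rows.
Proof. by case: c => [[[] []] []]. Qed.

Definition successors (s : state) : seq row := [seq c <- all_rows | admissible s c].

Fixpoint raise_entry (s : state) (v : int) (tbl : seq (state * int)) : seq (state * int) :=
  if tbl is (s', v') :: tbl' then
    if s' == s then (s', Num.max v v') :: tbl' else (s', v') :: raise_entry s v tbl'
  else [:: (s, v)].

Definition relax (tbl : seq (state * int)) : seq (state * int) :=
  foldl (fun t sv => foldl (fun t c => raise_entry (step sv.1 c) (sv.2 + (row_size c)%:Z - 2)%R t)
                           t (successors sv.1))
        tbl tbl.

(* Value iteration for the largest excess (filled cells minus twice the number
   of rows) with which each reachable state can be entered; six rounds reach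
   the fixed point. *)
Definition excess_table : seq (state * int) := iter 6 relax [:: (init_state, 0%R)].

Definition excess_closed (tbl : seq (state * int)) : bool :=
  all (fun sv => all (fun c => has (fun sv' => (sv'.1 == step sv.1 c)
                                      && (sv.2 + (row_size c)%:Z - 2 <= sv'.2)%R) tbl)
                     (successors sv.1))
      tbl.

Definition excess_certificate (tbl : seq (state * int)) : bool :=
  [&& (init_state, 0%R) \in tbl, excess_closed tbl & all (fun sv => sv.2 <= 1)%R tbl].

Lemma excess_table_certificate : excess_certificate excess_table.
Proof. by vm_compute. Qed.

Section Certificate.
Variable tbl : seq (state * int).
Hypothesis tbl_cert : excess_certificate tbl.

Lemma certificate_step s (v : int) c :
  (s, v) \in tbl -> admissible s c ->
  exists2 v' : int, (step s c, v') \in tbl & (v + (row_size c)%:Z - 2 <= v')%R.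
Proof.
move=> sv_in adm; have /and3P [_ /allP closed _] := tbl_cert.
have /allP /(_ c) := closed _ sv_in.
rewrite mem_filter adm mem_all_rows => /(_ isT) /hasP [[s' v'] in' /andP [/eqP /= eq_s le]].
by exists v'; rewrite -?eq_s.
Qed.

Lemma certificate_le1 s (v : int) : (s, v) \in tbl -> (v <= 1)%R.
Proof. by have /and3P [_ _ /allP bound] := tbl_cert; move/bound. Qed.

End Certificate.

Section ScanRows.
Variables (h : nat) (f : nat -> nat -> bool).
Hypothesis f_out : forall i j, (h <= i) || (3 <= j) -> f i j = false.
Hypothesis f_deg : forall i j, f i j -> neighbours f i j <= 2.
Hypothesis f_rows : forall i, i < h -> [|| f i 0, f i 1 | f i 2].
Variable tbl : seq (state * int).
Hypothesis tbl_cert : excess_certificate tbl.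

Definition row_of (i : nat) : row := (f i 0, f i 1, f i 2).
Definition row_before (k : nat) : row := if k is k'.+1 then row_of k' else empty_row.

Fixpoint scan (k : nat) : state :=
  if k is k'.+1 then step (scan k') (row_of k') else init_state.

Lemma scan_rows k : (scan k).1 = (row_before k.-1, row_before k).
Proof. by elim: k => [|k IH] //=; rewrite IH. Qed.

Lemma row_beforeE k :
  row_before k = ((0 < k) && f k.-1 0, (0 < k) && f k.-1 1, (0 < k) && f k.-1 2).
Proof. by case: k. Qed.

Lemma deg2_row_before k : deg2_row (row_before k.-1) (row_before k) (row_of k).
Proof.
case: k => [|k] //.
have f_k3 : f k 3 = false by rewrite f_out ?orbT.
rewrite row_beforeE /row_of /deg2_row /=.
by apply/and3P; split; apply/implyP => /f_deg; rewrite /neighbours ?f_k3 /=; lia.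
Qed.

Lemma scan_run k d : (scan k).2 = d.+1 ->
  exists r, [/\ r + d.+1 <= k, f r 1 & forall m, r <= m < k -> f m 0].
Proof.
elim: k d => [|k IH] d //=; rewrite /next_run /=.
case fk0: (f k 0) => //=; case: ifP => [t_gt0 [<-] | _].
  have [r [r_le fr1 run]] : exists r, [/\ r + 1 <= k, f r 1 & forall m, r <= m < k -> f m 0].
    by case: (scan k).2 t_gt0 IH => // t _ /(_ t erefl) [r [? ? ?]]; exists r; split => //; lia.
  exists r; split => // [|m /andP [r_m m_k]]; first lia.
  by have [->|m_ne] := eqVneq m k; last apply: run; lia.
case fk1: (f k 1) => // -[<-].
exists k; split => //; first lia.
by move=> m m_k; have -> : m = k by lia.
Qed.

Lemma bench_of_legs r k : r + 2 <= k -> k < h -> f r 1 -> f k 1 ->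
  (forall m, r <= m <= k -> f m 0) -> bench_in f h 0 1.
Proof.
move=> r_k k_h fr1 fk1 seat.
exists (k - r).+1, r; split; [lia | lia | | | move=> i i_gt0 i_lt].
- by move=> i i_lt; apply: seat; lia.
- by rewrite (_ : r + (k - r).+1 - 1 = k) ?fr1 ?fk1 //; lia.
have deg := @f_deg (r + i) 0; rewrite /neighbours /= in deg.
have [fm fm_pred fm_succ] : [/\ f (r + i) 0, f (r + i).-1 0 & f (r + i).+1 0].
  by split; apply: seat; lia.
move: deg; rewrite fm fm_pred fm_succ (_ : 0 < r + i); last lia.
by case: (f (r + i) 1) => // /(_ isT).
Qed.

Hypothesis no_bench : ~ bench_in f h 0 1.

Lemma admissible_scan k : k < h -> admissible (scan k) (row_of k).
Proof.
move=> k_h; apply/and3P; split.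
- by move: (f_rows k_h); rewrite /row_of; case: (f k 0); case: (f k 1); case: (f k 2).
- by rewrite scan_rows; apply: deg2_row_before.
apply/negP => /and3P [/= fk0 fk1]; case E: (scan k).2 => [|d] // d_ge1.
have [r [r_k fr1 run]] := scan_run E.
apply: no_bench; apply: (@bench_of_legs r k) => //; first lia.
by move=> m /andP [r_m m_k]; have [->|m_ne] := eqVneq m k; last apply: run; lia.
Qed.

Lemma scan_excess k : k <= h -> exists2 v : int, (scan k, v) \in tbl &
  ((\sum_(i < k) (f i 0 + f i 1 + f i 2))%:Z <= v + (2 * k)%:Z)%R.
Proof.
elim: k => [_|k IH k_h].
  by exists 0%R; [case/and3P: tbl_cert | rewrite big_ord0].
have [v sv_in bound] := IH (ltnW k_h).
have [v' sv'_in step_bound] := certificate_step tbl_cert sv_in (admissible_scan k_h).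
by exists v' => //; move: bound step_bound; rewrite big_ord_recr /=; lia.
Qed.

Lemma sum_rows_le : \sum_(i < h) (f i 0 + f i 1 + f i 2) <= 2 * h + 1.
Proof.
have [v sv_in bound] := scan_excess (leqnn h).
have := certificate_le1 tbl_cert sv_in.
lia.
Qed.

End ScanRows.

Lemma bench_of_dense_col0 h (f : nat -> nat -> bool) :
  (forall i j, (h <= i) || (3 <= j) -> f i j = false) ->
  (forall i j, f i j -> neighbours f i j <= 2) ->
  (forall i, i < h -> [|| f i 0, f i 1 | f i 2]) ->
  2 * h + 2 <= \sum_(i < h) (f i 0 + f i 1 + f i 2) -> bench_in f h 0 1.
Proof.
move=> f_out f_deg f_rows dense; apply: NNPP => no_bench.
have := sum_rows_le f_out f_deg f_rows excess_table_certificate no_bench; lia.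
Qed.

Definition mirror (f : nat -> nat -> bool) (i j : nat) : bool := (j < 3) && f i (2 - j).

Lemma neighbours_mirror f i j : f i 3 = false -> j < 3 ->
  neighbours (mirror f) i j = neighbours f i (2 - j).
Proof.
by move=> fi3; case: j => [|[|[|j]]] // _; rewrite /neighbours /mirror /= ?subSS ?subn0 ?fi3; lia.
Qed.

Lemma bench_of_dense_col2 h (f : nat -> nat -> bool) :
  (forall i j, (h <= i) || (3 <= j) -> f i j = false) ->
  (forall i j, f i j -> neighbours f i j <= 2) ->
  (forall i, i < h -> [|| f i 0, f i 1 | f i 2]) ->
  2 * h + 2 <= \sum_(i < h) (f i 0 + f i 1 + f i 2) -> bench_in f h 2 1.
Proof.
move=> f_out f_deg f_rows dense.
have fi3 i : f i 3 = false by rewrite f_out ?orbT.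
apply: (@bench_of_dense_col0 h (mirror f)).
- move=> i j /orP [i_h | j_3]; last by rewrite /mirror ltnNge j_3.
  by rewrite /mirror f_out ?i_h ?andbF.
- move=> i j /andP [j_3 fij]; rewrite neighbours_mirror //; exact: f_deg.
- by move=> i /f_rows; rewrite /mirror /=; case: (f i 0); case: (f i 1); case: (f i 2).
rewrite (eq_bigr (fun i : 'I_h => f i 0 + f i 1 + f i 2)) // => i _.
by rewrite /mirror /= ?subSS ?subn0; lia.
Qed.

Lemma sum_ord_pick n p c : \sum_(a < n) ((a == p :> nat) * c) = (p < n) * c.
Proof.
elim: n => [|n IH]; first by rewrite big_ord0.
rewrite big_ord_recr /= IH; have [->|n_p] := eqVneq n p; first by rewrite ltnn ltnSn.
by rewrite mul0n addn0 (_ : (p < n.+1) = (p < n)) //; lia.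
Qed.

Section Cells.
Variables (h w : nat) (W : 'M[bool]_(h, w)).

Lemma filled_ord (a : 'I_h) (b : 'I_w) : filled W a b = W a b.
Proof. by rewrite /filled !valK. Qed.

Lemma filled_out i j : (h <= i) || (w <= j) -> filled W i j = false.
Proof.
rewrite /filled; case/orP => out; first by rewrite insubN // -leqNgt.
by case: insub => // a; rewrite insubN // -leqNgt.
Qed.

Lemma card_cells (P : 'I_h * 'I_w -> bool) :
  #|[set d | P d]| = \sum_(a < h) \sum_(b < w) P (a, b).
Proof.
rewrite (pair_big xpredT xpredT (fun a b => nat_of_bool (P (a, b)))) /=.
by rewrite -sum1dep_card big_mkcond /=; apply: eq_bigr => -[a b] _; case: (P _).
Qed.

Lemma sum_filled_unique (P : nat -> nat -> bool) p q :
  (forall a b, P a b -> a = p /\ b = q) ->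
  \sum_(a < h) \sum_(b < w) (filled W a b && P a b) = filled W p q && P p q.
Proof.
move=> P_at.
transitivity (\sum_(a < h) ((a == p :> nat) *
                 \sum_(b < w) ((b == q :> nat) * (filled W p q && P p q)))).
  apply: eq_bigr => a _; rewrite big_distrr /=; apply: eq_bigr => b _.
  case Pab: (P a b); first by have [<- <-] := P_at _ _ Pab; rewrite Pab !eqxx !mul1n.
  by rewrite andbF; case: eqP => [<-|_]; case: eqP => [<-|_]; rewrite ?Pab ?andbF ?muln0.
under eq_bigr => a _ do rewrite sum_ord_pick.
rewrite sum_ord_pick.
case: (ltnP p h) => [p_h|p_h]; case: (ltnP q w) => [q_w|q_w] //=; rewrite ?mul1n //.
- by rewrite filled_out ?q_w ?orbT.
- by rewrite filled_out ?p_h.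
- by rewrite filled_out ?p_h.
Qed.

Lemma degree_neighbours (x : 'I_h) (y : 'I_w) : degree W (x, y) = neighbours (filled W) x y.
Proof.
rewrite /degree card_cells /=.
have split_adj (a : 'I_h) (b : 'I_w) : W a b && adjacent (x, y) (a, b)
    = (filled W a b && ((x == a.+1 :> nat) && (y == b :> nat)))
      + (filled W a b && ((a == x.+1 :> nat) && (y == b :> nat)))
      + (filled W a b && ((x == a :> nat) && (y == b.+1 :> nat)))
      + (filled W a b && ((x == a :> nat) && (b == y.+1 :> nat))) :> nat.
  by rewrite /adjacent filled_ord; case: (W a b) => /=; lia.
under eq_bigr => a _ do under eq_bigr => b _ do rewrite split_adj.
rewrite !(big_split, (eq_bigr _ (fun a _ => big_split _ _ _ _ _))) /=.
rewrite (@sum_filled_unique (fun a b => (x == a.+1 :> nat) && (y == b :> nat)) x.-1 y)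
  ?(@sum_filled_unique (fun a b => (a == x.+1) && (y == b :> nat)) x.+1 y)
  ?(@sum_filled_unique (fun a b => (x == a :> nat) && (y == b.+1 :> nat)) x y.-1)
  ?(@sum_filled_unique (fun a b => (x == a :> nat) && (b == y.+1)) x y.+1);
  try by move=> a b /andP [/eqP ? /eqP ?]; split; lia.
have succ_pred n : (n == n.-1.+1) = (0 < n) by case: n => [|n] //=; rewrite eqxx.
by rewrite /neighbours !eqxx !andbT !succ_pred (andbC (filled W x.-1 y)) (andbC (filled W x y.-1)).
Qed.

End Cells.

Section Width3.
Variable h : nat.

Lemma nfilled_rows (W : 'M[bool]_(h, 3)) :
  nfilled W = \sum_(i < h) (filled W i 0 + filled W i 1 + filled W i 2).
Proof.
rewrite /nfilled card_cells; apply: eq_bigr => i _.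
rewrite (eq_bigr (fun b : 'I_3 => nat_of_bool (filled W i b))) => [|b _]; last by rewrite filled_ord.
by rewrite !big_ord_recr big_ord0.
Qed.

Lemma inW2_neighbours (W : 'M[bool]_(h, 3)) :
  inW2 W -> forall i j, filled W i j -> neighbours (filled W) i j <= 2.
Proof.
move=> W2 i j fij.
have [i_h | h_i] := ltnP i h; last by rewrite filled_out ?h_i in fij.
have [j_3 | j_3] := ltnP j 3; last by rewrite filled_out ?j_3 ?orbT in fij.
have := W2 (Ordinal i_h, Ordinal j_3); rewrite degree_neighbours; apply.
by rewrite -filled_ord.
Qed.

Lemma atomic_rows (W : 'M[bool]_(h, 3)) :
  atomic W -> forall i, i < h -> [|| filled W i 0, filled W i 1 | filled W i 2].
Proof.
move=> W_at i i_h; have [j Wij] := W_at (Ordinal i_h).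
have : filled W i j by rewrite -[i]/(nat_of_ord (Ordinal i_h)) filled_ord.
by case: j {Wij} => -[|[|[|j]]] //= _ ->; rewrite ?orbT.
Qed.

Definition frame : 'M[bool]_(h, 3) :=
  \matrix_(i < h, j < 3) [|| i == 0 :> nat, i == h.-1 :> nat | j != 1 :> nat].

Lemma filled_frame i j :
  filled frame i j = [&& i < h, j < 3 & [|| i == 0, i == h.-1 | j != 1]].
Proof.
have [i_h | h_i] := ltnP i h; last by rewrite filled_out ?h_i.
have [j_3 | j_3] := ltnP j 3; last by rewrite filled_out ?j_3 ?orbT ?andbF.
by rewrite -[i]/(nat_of_ord (Ordinal i_h)) -[j]/(nat_of_ord (Ordinal j_3)) filled_ord mxE.
Qed.

Lemma frame_inW2 : 3 <= h -> inW2 frame.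
Proof.
move=> h_ge3 [x y] /=; rewrite degree_neighbours /neighbours !filled_frame.
rewrite -filled_ord filled_frame; have := ltn_ord x; have := ltn_ord y.
by move: (x : nat) (y : nat) => a b; lia.
Qed.

Lemma nfilled_frame : 3 <= h -> nfilled frame = 2 * h + 2.
Proof.
move=> h_ge3; rewrite nfilled_rows.
rewrite (eq_bigr (fun i : 'I_h => 2 + ((i == 0 :> nat) * 1 + (i == h.-1 :> nat) * 1)));
  last by move=> i _; rewrite !filled_frame; have := ltn_ord i; move: (i : nat) => a; lia.
rewrite big_split /= sum_nat_const card_ord big_split /= !sum_ord_pick; lia.
Qed.

Lemma two_full_dense (W : 'M[bool]_(h, 3)) : 3 <= h -> two_full W ->
  2 * h + 2 <= \sum_(i < h) (filled W i 0 + filled W i 1 + filled W i 2).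
Proof.
move=> h_ge3 [_ W_max]; rewrite -nfilled_rows -(nfilled_frame h_ge3).
exact/W_max/frame_inW2.
Qed.

End Width3.

Theorem mainTheorem5 (h : nat) (W : 'M[bool]_(h, 3)) :
  3 <= h -> inW2 W -> two_full W -> atomic W ->
  bench W 0 1 /\ bench W 2 1.
Proof.
move=> h_ge3 W2 W_full W_at.
have out i j : (h <= i) || (3 <= j) -> filled W i j = false := @filled_out _ _ W i j.
have deg := inW2_neighbours W2.
have rows := atomic_rows W_at.
have dense := two_full_dense h_ge3 W_full.
split; split => //.
- exact: bench_of_dense_col0 out deg rows dense.
- exact: bench_of_dense_col2 out deg rows dense.
Qed.
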